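(* There is an equivalence of monoidal categories $\mathrm{Ext}(\mathrm{Aux}(\mathbf{Isometry}))\simeq\mathbf{CPTP}$.
   Context: $\mathbf{Isometry}$: objects finite-dimensional complex Hilbert spaces, morphisms isometric linear maps, monoidal structure the Hilbert space tensor product with unit $\mathbb C$, trivial restriction structure ($\overline f=\mathrm{id}$ for all $f$). $\mathbf{CPTP}$: objects finite-dimensional Hilbert spaces, morphisms $H\to K$ the completely positive trace-preserving linear maps $\mathcal B(H)\to\mathcal B(K)$, monoidal structure the tensor product. A restriction category is a category with an assignment $f\mapsto\overline f$ of endomorphisms satisfying $f\circ\overline f=f$, $\overline f\circ\overline g=\overline g\circ\overline f$, $\overline{g\circ\overline f}=\overline g\circ\overline f$, $\overline g\circ f=f\circ\overline{g\circ f}$. For a symmetric monoidal restriction category $\mathbf C$ (with $\overline{f\otimes g}=\overline f\otimes\overline g$), unit $I$, associator $\alpha$, right unitor $\rho$: for $f\colon A\to B\otimes E$, $f'\colon A\to B\otimes E'$ write $f\triangleright f'$ if $\overline f=\overline{f'}$ and $(\mathrm{id}_B\otimes h)\circ f=f'$ for some $h\colon E\to E'$; $\sim$ is the generated equivalence relation. $\mathrm{Aux}(\mathbf C)$ has the objects of $\mathbf C$, morphisms $A\to B$ the classes $[f,E]$ of $f\colon A\to B\otimes E$, composition $[g,E']\circ[f,E]=[\alpha\circ(g\otimes\mathrm{id})\circ f,E'\otimes E]$, identities $[\rho^{-1},I]$, tensor $[f,E]\otimes[f',E']=[\vartheta\circ(f\otimes f'),E\otimes E']$ with $\vartheta$ the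 canonical rearrangement isomorphism; its tensor unit is restriction terminal (every object has exactly one total morphism to it), so it is pointed by $I$. For a pointed restriction category, $f\approx g$ iff $f\circ a=g\circ a$ for all $a\colon I\to A$, and $\mathrm{Ext}(\mathbf C)=\mathbf C/{\approx}$, here with the monoidal structure induced from $\mathrm{Aux}(\mathbf{Isometry})$. *)

From HB Require Import structures.
From mathcomp Require Import all_boot all_order all_algebra.
From mathcomp Require Import complex mxtens Rstruct.
From Stdlib Require Import Relations.

Set Implicit Arguments.
Unset Strict Implicit.
Unset Printing Implicit Defensive.

Import GRing.Theory Num.Theory.
Local Open Scope ring_scope.

(* Part 1.  Monoidal categories (hom-sets given as subsets of carrier types, *)
(*          with a hom-wise equality "heq" of morphisms).                   *)

Record MonCat := {
  ob : Type;
  hom : ob -> ob -> Type;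
  valid : forall a b, hom a b -> Prop;
  heq : forall a b, hom a b -> hom a b -> Prop;
  idm : forall a, hom a a;
  comp : forall a b c, hom b c -> hom a b -> hom a c;  (* comp g f = g o f *)
  tob : ob -> ob -> ob;
  thom : forall a b a' b', hom a a' -> hom b b' -> hom (tob a b) (tob a' b');
  tunit : ob;
  assoc : forall a b c, hom (tob (tob a b) c) (tob a (tob b c));
  assoc_inv : forall a b c, hom (tob a (tob b c)) (tob (tob a b) c);
  lunit : forall a, hom (tob tunit a) a;
  lunit_inv : forall a, hom a (tob tunit a);
  runit : forall a, hom (tob a tunit) a;
  runit_inv : forall a, hom a (tob a tunit) }.

Arguments ob : clear implicits.
Arguments hom {M} a b : rename.
Arguments valid {M a b} f : rename.
Arguments heq {M a b} f g : rename.
Arguments idm {M} a : rename.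
Arguments comp {M a b c} g f : rename.
Arguments tob {M} a b : rename.
Arguments thom {M a b a' b'} f g : rename.
Arguments tunit {M} : rename.
Arguments assoc {M} a b c : rename.
Arguments assoc_inv {M} a b c : rename.
Arguments lunit {M} a : rename.
Arguments lunit_inv {M} a : rename.
Arguments runit {M} a : rename.
Arguments runit_inv {M} a : rename.

Definition inverse_pair (M : MonCat) (a b : ob M) (f : hom a b) (g : hom b a) :=
  [/\ valid f, valid g, heq (comp g f) (idm a) & heq (comp f g) (idm b)].

Record is_moncat (M : MonCat) : Prop := {
  heq_refl : forall a b (f : @hom M a b), valid f -> heq f f;
  heq_sym : forall a b (f g : @hom M a b), valid f -> valid g ->
    heq f g -> heq g f;
  heq_trans : forall a b (f g h : @hom M a b), valid f -> valid g -> valid h ->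
    heq f g -> heq g h -> heq f h;
  valid_idm : forall a : ob M, valid (idm a);
  valid_comp : forall (a b c : ob M) (g : hom b c) (f : hom a b),
    valid g -> valid f -> valid (comp g f);
  valid_thom : forall (a b a' b' : ob M) (f : hom a a') (g : hom b b'),
    valid f -> valid g -> valid (thom f g);
  comp_proper : forall (a b c : ob M) (g g' : hom b c) (f f' : hom a b),
    valid g -> valid g' -> valid f -> valid f' ->
    heq g g' -> heq f f' -> heq (comp g f) (comp g' f');
  thom_proper : forall (a b a' b' : ob M) (f f' : hom a a') (g g' : hom b b'),
    valid f -> valid f' -> valid g -> valid g' ->
    heq f f' -> heq g g' -> heq (thom f g) (thom f' g');
  comp_assoc : forall (a b c d : ob M) (h : hom c d) (g : hom b c) (f : hom a b),
    valid h -> valid g -> valid f ->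
    heq (comp h (comp g f)) (comp (comp h g) f);
  comp_idl : forall (a b : ob M) (f : hom a b), valid f -> heq (comp (idm b) f) f;
  comp_idr : forall (a b : ob M) (f : hom a b), valid f -> heq (comp f (idm a)) f;
  thom_id : forall a b : ob M, heq (thom (idm a) (idm b)) (idm (tob a b));
  thom_comp : forall (a b c a' b' c' : ob M) (f : hom a b) (g : hom b c)
      (f' : hom a' b') (g' : hom b' c'),
    valid f -> valid g -> valid f' -> valid g' ->
    heq (thom (comp g f) (comp g' f')) (comp (thom g g') (thom f f'));
  assoc_iso : forall a b c : ob M, inverse_pair (assoc a b c) (assoc_inv a b c);
  lunit_iso : forall a : ob M, inverse_pair (lunit a) (lunit_inv a);
  runit_iso : forall a : ob M, inverse_pair (runit a) (runit_inv a);
  assoc_nat : forall (a b c a' b' c' : ob M) (f : hom a a') (g : hom b b')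
      (h : hom c c'), valid f -> valid g -> valid h ->
    heq (comp (assoc a' b' c') (thom (thom f g) h))
        (comp (thom f (thom g h)) (assoc a b c));
  lunit_nat : forall (a b : ob M) (f : hom a b), valid f ->
    heq (comp (lunit b) (thom (idm tunit) f)) (comp f (lunit a));
  runit_nat : forall (a b : ob M) (f : hom a b), valid f ->
    heq (comp (runit b) (thom f (idm tunit))) (comp f (runit a));
  pentagon : forall a b c d : ob M,
    heq (comp (thom (idm a) (assoc b c d))
              (comp (assoc a (tob b c) d) (thom (assoc a b c) (idm d))))
        (comp (assoc a b (tob c d)) (assoc (tob a b) c d));
  triangle : forall a b : ob M,
    heq (comp (thom (idm a) (lunit b)) (assoc a tunit b))
        (thom (runit a) (idm b)) }.

Record MonFun (M N : MonCat) := {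
  fob : ob M -> ob N;
  fhom : forall a b : ob M, hom a b -> hom (fob a) (fob b);
  f0 : hom (@tunit N) (fob tunit);
  f0_inv : hom (fob tunit) (@tunit N);
  f2 : forall a b : ob M, hom (tob (fob a) (fob b)) (fob (tob a b));
  f2_inv : forall a b : ob M, hom (fob (tob a b)) (tob (fob a) (fob b)) }.

Arguments fob {M N} F a : rename.
Arguments fhom {M N} F {a b} f : rename.
Arguments f0 {M N} F : rename.
Arguments f0_inv {M N} F : rename.
Arguments f2 {M N} F a b : rename.
Arguments f2_inv {M N} F a b : rename.

Record is_strong_monoidal (M N : MonCat) (F : MonFun M N) : Prop := {
  fhom_valid : forall (a b : ob M) (f : hom a b), valid f -> valid (fhom F f);
  fhom_proper : forall (a b : ob M) (f g : hom a b), valid f -> valid g ->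
    heq f g -> heq (fhom F f) (fhom F g);
  fhom_id : forall a : ob M, heq (fhom F (idm a)) (idm (fob F a));
  fhom_comp : forall (a b c : ob M) (g : hom b c) (f : hom a b),
    valid g -> valid f -> heq (fhom F (comp g f)) (comp (fhom F g) (fhom F f));
  f0_iso : inverse_pair (f0 F) (f0_inv F);
  f2_iso : forall a b : ob M, inverse_pair (f2 F a b) (f2_inv F a b);
  f2_nat : forall (a b a' b' : ob M) (f : hom a a') (g : hom b b'),
    valid f -> valid g ->
    heq (comp (fhom F (thom f g)) (f2 F a b))
        (comp (f2 F a' b') (thom (fhom F f) (fhom F g)));
  f2_assoc : forall a b c : ob M,
    heq (comp (fhom F (assoc a b c))
              (comp (f2 F (tob a b) c) (thom (f2 F a b) (idm (fob F c)))))
        (comp (f2 F a (tob b c))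
              (comp (thom (idm (fob F a)) (f2 F b c))
                    (assoc (fob F a) (fob F b) (fob F c))));
  f2_lunit : forall a : ob M,
    heq (lunit (fob F a))
        (comp (fhom F (lunit a)) (comp (f2 F tunit a) (thom (f0 F) (idm (fob F a)))));
  f2_runit : forall a : ob M,
    heq (runit (fob F a))
        (comp (fhom F (runit a)) (comp (f2 F a tunit) (thom (idm (fob F a)) (f0 F)))) }.

Record is_equivalence (M N : MonCat) (F : MonFun M N) : Prop := {
  F_full : forall (a b : ob M) (g : hom (fob F a) (fob F b)), valid g ->
    exists2 f : hom a b, valid f & heq (fhom F f) g;
  F_faithful : forall (a b : ob M) (f g : hom a b), valid f -> valid g ->
    heq (fhom F f) (fhom F g) -> heq f g;
  F_esssurj : forall d : ob N, exists c : ob M,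
    exists (i : hom (fob F c) d) (j : hom d (fob F c)), inverse_pair i j }.

Definition monoidal_equivalence (M N : MonCat) (F : MonFun M N) : Prop :=
  is_strong_monoidal F /\ is_equivalence F.

(* Part 2.  Linear algebra over C.  The Hilbert space C^n is the object n.  *)
(* A linear map C^n -> C^m is a matrix 'M_(m, n); C^n (x) C^m = C^(n*m)     *)
(* via the Kronecker product *t.                                             *)

Notation C := (Rdefinitions.R[i]).

Definition adj m n (A : 'M[C]_(m, n)) : 'M[C]_(n, m) := (map_mx Num.conj A)^T.

Definition isometry m n (V : 'M[C]_(m, n)) : Prop := adj V *m V = 1%:M.

Definition pmx n m (f : 'I_n -> 'I_m) : 'M[C]_(m, n) :=
  \matrix_(r, s) ((r == f s)%:R).

(* canonical isomorphisms of the (skeletal) category Isometry *)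
Definition alpha_mx a b c : 'M[C]_(a * (b * c), (a * b) * c) :=
  pmx (cast_ord (esym (mulnA a b c))).
Definition alpha_inv_mx a b c : 'M[C]_((a * b) * c, a * (b * c)) :=
  pmx (cast_ord (mulnA a b c)).
Definition lambda_mx a : 'M[C]_(a, 1 * a) := pmx (cast_ord (mul1n a)).
Definition lambda_inv_mx a : 'M[C]_(1 * a, a) := pmx (cast_ord (esym (mul1n a))).
Definition rho_mx a : 'M[C]_(a, a * 1) := pmx (cast_ord (muln1 a)).
Definition rho_inv_mx a : 'M[C]_(a * 1, a) := pmx (cast_ord (esym (muln1 a))).

(* canonical rearrangement (B (x) E) (x) (B' (x) E') -> (B (x) B') (x) (E (x) E') *)
Definition theta_fun b e b' e' (s : 'I_((b * e) * (b' * e'))) :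
    'I_((b * b') * (e * e')) :=
  let xy := mxtens_unindex s in
  let ij := mxtens_unindex xy.1 in
  let kl := mxtens_unindex xy.2 in
  mxtens_index (mxtens_index (ij.1, kl.1), mxtens_index (ij.2, kl.2)).
Definition theta_mx b e b' e' : 'M[C]_((b * b') * (e * e'), (b * e) * (b' * e')) :=
  pmx (@theta_fun b e b' e').

(* A morphism n -> m of Aux is represented by f : n -> m (x) e, an isometry. *)

Record auxhom (n m : nat) := AuxHom {
  aux_e : nat;
  aux_V : 'M[C]_(m * aux_e, n) }.
Arguments AuxHom {n m} aux_e aux_V.

Definition aux_valid n m (f : auxhom n m) : Prop := isometry (aux_V f).

(* f |> g : (id_B (x) h) o f = g for some isometry h  (restriction is trivial) *)
Definition aux_pre n m (f g : auxhom n m) : Prop :=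
  aux_valid f /\ aux_valid g /\
  exists h : 'M[C]_(aux_e g, aux_e f),
    isometry h /\ (1%:M *t h) *m aux_V f = aux_V g.

Definition aux_sim n m : relation (auxhom n m) :=
  clos_refl_sym_trans (auxhom n m) (@aux_pre n m).

Definition aux_id n : auxhom n n := AuxHom 1 (rho_inv_mx n).

Definition aux_comp n m k (g : auxhom m k) (f : auxhom n m) : auxhom n k :=
  AuxHom (aux_e g * aux_e f)
    (alpha_mx k (aux_e g) (aux_e f) *m (aux_V g *t 1%:M) *m aux_V f).

Definition aux_tens n n' m m' (f : auxhom n m) (f' : auxhom n' m') :
    auxhom (n * n') (m * m') :=
  AuxHom (aux_e f * aux_e f')
    (theta_mx m (aux_e f) m' (aux_e f') *m (aux_V f *t aux_V f')).

Definition aux_emb n m (U : 'M[C]_(m, n)) : auxhom n m :=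
  AuxHom 1 (rho_inv_mx m *m U).

Definition ext_eq n m (f g : auxhom n m) : Prop :=
  forall a : auxhom 1 n, aux_valid a ->
    aux_sim (aux_comp f a) (aux_comp g a).

Definition ExtAuxIsometry : MonCat := {|
  ob := nat;
  hom := auxhom;
  valid := @aux_valid;
  heq := @ext_eq;
  idm := aux_id;
  comp := @aux_comp;
  tob := muln;
  thom := @aux_tens;
  tunit := 1%N;
  assoc := fun a b c => aux_emb (alpha_mx a b c);
  assoc_inv := fun a b c => aux_emb (alpha_inv_mx a b c);
  lunit := fun a => aux_emb (lambda_mx a);
  lunit_inv := fun a => aux_emb (lambda_inv_mx a);
  runit := fun a => aux_emb (rho_mx a);
  runit_inv := fun a => aux_emb (rho_inv_mx a) |}.

(* Part 4.  CPTP: objects n (the space C^n), morphisms n -> m the completely *)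
(* positive trace-preserving linear maps B(C^n) = 'M_n -> 'M_m = B(C^m).     *)

Definition psd n (P : 'M[C]_n) : Prop :=
  forall x : 'cV[C]_n, 0 <= (adj x *m P *m x) 0 0.

(* (id_{B(C^k)} (x) Phi) applied to P in B(C^k (x) C^n) *)
Definition ampl k n m (Phi : 'M[C]_n -> 'M[C]_m) (P : 'M[C]_(k * n)) :
    'M[C]_(k * m) :=
  \sum_(i < k) \sum_(j < k)
     (delta_mx i j *t Phi (\matrix_(a, b) P (mxtens_index (i, a))
                                            (mxtens_index (j, b)))).

Definition cptp n m (Phi : 'M[C]_n -> 'M[C]_m) : Prop :=
  [/\ (forall (c : C) (X Y : 'M[C]_n), Phi (c *: X + Y) = c *: Phi X + Phi Y),
      (forall X : 'M[C]_n, \tr (Phi X) = \tr X) &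
      (forall k (P : 'M[C]_(k * n)), psd P -> psd (@ampl k n m Phi P))].

(* tensor product of linear maps on matrix algebras, defined on matrix units *)
Definition cp_tens n n' m m' (Phi : 'M[C]_n -> 'M[C]_m) (Psi : 'M[C]_n' -> 'M[C]_m')
    (X : 'M[C]_(n * n')) : 'M[C]_(m * m') :=
  \sum_(i < n) \sum_(j < n) \sum_(k < n') \sum_(l < n')
     X (mxtens_index (i, k)) (mxtens_index (j, l)) *:
       (Phi (delta_mx i j) *t Psi (delta_mx k l)).

Definition conj_ch n m (U : 'M[C]_(m, n)) (X : 'M[C]_n) : 'M[C]_m :=
  U *m X *m adj U.

Definition CPTPcat : MonCat := {|
  ob := nat;
  hom := fun n m => 'M[C]_n -> 'M[C]_m;
  valid := @cptp;
  heq := fun n m Phi Psi => forall X, Phi X = Psi X;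
  idm := fun n X => X;
  comp := fun n m k Psi Phi X => Psi (Phi X);
  tob := muln;
  thom := @cp_tens;
  tunit := 1%N;
  assoc := fun a b c => conj_ch (alpha_mx a b c);
  assoc_inv := fun a b c => conj_ch (alpha_inv_mx a b c);
  lunit := fun a => conj_ch (lambda_mx a);
  lunit_inv := fun a => conj_ch (lambda_inv_mx a);
  runit := fun a => conj_ch (rho_mx a);
  runit_inv := fun a => conj_ch (rho_inv_mx a) |}.

From Pilot Require Import Defs.
From HB Require Import structures.
From mathcomp Require Import all_boot all_order all_algebra.
From mathcomp Require Import complex mxtens Rstruct.
From mathcomp Require spectral.
From mathcomp Require Import ring.
From Stdlib Require Import FunctionalExtensionality Relations.

(* The equivalence F is the identity on objects and sends a morphism [V, E],
   V : C^n -> C^m (x) C^E an isometry, to its Stinespring channel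
   X |-> tr_E (V X V^* ).  Together: f ~~ g iff
     chan f = chan g, so F is well defined and faithful;
   - CPTP satisfies the monoidal coherence laws (checked on matrix units), and
     those of Ext(Aux(Isometry)) follow by reflecting them along F. *)

Set Implicit Arguments.
Unset Strict Implicit.
Unset Printing Implicit Defensive.
Import GRing.Theory Num.Theory Order.TTheory.
Local Open Scope ring_scope.
Local Notation isom := Defs.isometry.

Lemma adjE m n (A : 'M[C]_(m, n)) i j : adj A i j = (A j i)^*.
Proof. by rewrite /adj !mxE. Qed.

Lemma adj_mul m n p (A : 'M[C]_(m, n)) (B : 'M[C]_(n, p)) :
  adj (A *m B) = adj B *m adj A.
Proof. by rewrite /adj map_mxM trmx_mul. Qed.

Lemma adjK m n (A : 'M[C]_(m, n)) : adj (adj A) = A.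
Proof. by apply/matrixP => i j; rewrite !adjE conjCK. Qed.

Lemma adjD m n (A B : 'M[C]_(m, n)) : adj (A + B) = adj A + adj B.
Proof. by apply/matrixP => i j; rewrite !mxE rmorphD. Qed.

Lemma adjB m n (A B : 'M[C]_(m, n)) : adj (A - B) = adj A - adj B.
Proof. by apply/matrixP => i j; rewrite !mxE rmorphB. Qed.

Lemma adjZ m n (c : C) (A : 'M[C]_(m, n)) : adj (c *: A) = c^* *: adj A.
Proof. by apply/matrixP => i j; rewrite !mxE rmorphM. Qed.

Lemma adj0 m n : adj (0 : 'M[C]_(m, n)) = 0.
Proof. by apply/matrixP => i j; rewrite !mxE rmorph0. Qed.

Lemma adj1 n : adj (1%:M : 'M[C]_n) = 1%:M.
Proof. by apply/matrixP => i j; rewrite !mxE eq_sym rmorph_nat. Qed.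

Lemma adj_tens m n p q (A : 'M[C]_(m, n)) (B : 'M[C]_(p, q)) :
  adj (A *t B) = adj A *t adj B.
Proof. by rewrite /adj map_mxT trmx_tens. Qed.

Lemma adj_delta m n (i : 'I_m) (j : 'I_n) :
  adj (delta_mx i j : 'M[C]_(m, n)) = delta_mx j i.
Proof. by apply/matrixP => a b; rewrite !mxE rmorph_nat andbC. Qed.

Lemma adj_row m n1 n2 (X : 'M[C]_(m, n1)) (Y : 'M[C]_(m, n2)) :
  adj (row_mx X Y) = col_mx (adj X) (adj Y).
Proof. by rewrite /adj map_row_mx tr_row_mx. Qed.

Lemma adj_col m1 m2 n (X : 'M[C]_(m1, n)) (Y : 'M[C]_(m2, n)) :
  adj (col_mx X Y) = row_mx (adj X) (adj Y).
Proof. by rewrite /adj map_col_mx tr_col_mx. Qed.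

Lemma mxtens_index_eq m n (x y : 'I_m * 'I_n) :
  (mxtens_index x == mxtens_index y) = (x == y).
Proof. exact: (inj_eq (can_inj (@mxtens_indexK _ _))). Qed.

Lemma sum_tens (V : nmodType) m n (F : 'I_(m * n) -> V) :
  \sum_(x < m * n) F x = \sum_(i < m) \sum_(j < n) F (mxtens_index (i, j)).
Proof.
rewrite pair_big /= (reindex (@mxtens_index m n)) /=.
  by apply: eq_bigr => -[i j].
exists (@mxtens_unindex m n) => x _; first by rewrite mxtens_indexK.
by rewrite mxtens_unindexK.
Qed.

Lemma tens1mx1 m n : (1%:M : 'M[C]_m) *t (1%:M : 'M[C]_n) = 1%:M.
Proof.
apply/matrixP => x y.
case: (mxtens_indexP x) => i j; case: (mxtens_indexP y) => k l.
by rewrite tensmxE !mxE mxtens_index_eq xpair_eqE -natrM mulnb.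
Qed.

Lemma tens_delta m n p q (i : 'I_m) (j : 'I_n) (k : 'I_p) (l : 'I_q) :
  (delta_mx i j : 'M[C]_(m, n)) *t (delta_mx k l : 'M[C]_(p, q))
  = delta_mx (mxtens_index (i, k)) (mxtens_index (j, l)).
Proof.
apply/matrixP => x y.
case: (mxtens_indexP x) => a b; case: (mxtens_indexP y) => c d.
rewrite tensmxE !mxE -natrM mulnb; congr (_%:R); congr nat_of_bool.
by rewrite !mxtens_index_eq !xpair_eqE andbACA.
Qed.

Section TensorBilinear.
Variables (m n p q : nat).
Implicit Types (A : 'M[C]_(m, n)) (B : 'M[C]_(p, q)).

Lemma tensmxDl A1 A2 B : (A1 + A2) *t B = A1 *t B + A2 *t B.
Proof. by apply/matrixP => i j; rewrite !mxE mulrDl. Qed.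

Lemma tensmxDr A B1 B2 : A *t (B1 + B2) = A *t B1 + A *t B2.
Proof. by apply/matrixP => i j; rewrite !mxE mulrDr. Qed.

Lemma tensmxZl c A B : (c *: A) *t B = c *: (A *t B).
Proof. by apply/matrixP => i j; rewrite !mxE mulrA. Qed.

Lemma tensmxZr c A B : A *t (c *: B) = c *: (A *t B).
Proof. by apply/matrixP => i j; rewrite !mxE mulrCA. Qed.

Lemma tensmx_suml I (r : seq I) (P : pred I) (F : I -> 'M[C]_(m, n)) B :
  (\sum_(i <- r | P i) F i) *t B = \sum_(i <- r | P i) (F i *t B).
Proof.
elim/big_rec2: _ => [|i y x _ IH]; first by rewrite tens0mx.
by rewrite tensmxDl IH.
Qed.

Lemma tensmx_sumr I (r : seq I) (P : pred I) A (F : I -> 'M[C]_(p, q)) :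
  A *t (\sum_(i <- r | P i) F i) = \sum_(i <- r | P i) (A *t F i).
Proof.
elim/big_rec2: _ => [|i y x _ IH]; first by rewrite tensmx0.
by rewrite tensmxDr IH.
Qed.

End TensorBilinear.

Lemma isometry_mul m n p (A : 'M[C]_(m, n)) (B : 'M[C]_(n, p)) :
  isom A -> isom B -> isom (A *m B).
Proof.
rewrite /Defs.isometry adj_mul => hA hB.
by rewrite mulmxA -(mulmxA (adj B)) hA mulmx1 hB.
Qed.

Lemma isometry_tens m n p q (A : 'M[C]_(m, n)) (B : 'M[C]_(p, q)) :
  isom A -> isom B -> isom (A *t B).
Proof.
by rewrite /Defs.isometry adj_tens tensmx_mul => -> ->; rewrite tens1mx1.
Qed.

Lemma isometry1 n : isom (1%:M : 'M[C]_n).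
Proof. by rewrite /Defs.isometry adj1 mulmx1. Qed.

Lemma isometry_tr m n (h : 'M[C]_(m, n)) : h *m adj h = 1%:M -> isom h^T.
Proof.
move=> hh; have T : (adj h^T)^T = adj h by rewrite /adj trmxK map_trmx.
by rewrite /Defs.isometry; apply: trmx_inj; rewrite trmx_mul T trmxK trmx1 hh.
Qed.

Lemma pmx_rmul k n m (X : 'M[C]_(k, m)) (f : 'I_n -> 'I_m) :
  X *m pmx f = \matrix_(x, s) X x (f s).
Proof.
apply/matrixP => x s; rewrite !mxE (bigD1 (f s)) //= big1 => [|y ne].
  by rewrite !mxE eqxx mulr1 addr0.
by rewrite !mxE (negbTE ne) mulr0.
Qed.

Lemma adj_pmx_lmul k n m (X : 'M[C]_(m, k)) (f : 'I_n -> 'I_m) :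
  adj (pmx f) *m X = \matrix_(s, y) X (f s) y.
Proof.
apply/matrixP => s y; rewrite !mxE (bigD1 (f s)) //= big1 => [|z ne].
  by rewrite !mxE eqxx rmorph1 mul1r addr0.
by rewrite !mxE (negbTE ne) rmorph0 mul0r.
Qed.

Lemma pmx_lmul k n m (X : 'M[C]_(n, k)) (f : 'I_n -> 'I_m) (g : 'I_m -> 'I_n) :
  cancel f g -> cancel g f -> pmx f *m X = \matrix_(r, y) X (g r) y.
Proof.
move=> fK gK; apply/matrixP => r y; rewrite !mxE (bigD1 (g r)) //= big1 => [|z ne].
  by rewrite !mxE gK eqxx mul1r addr0.
rewrite !mxE; case: eqP => [E|]; last by rewrite mul0r.
by move: ne; rewrite E fK eqxx.
Qed.

Lemma conj_pmx_bij n m (f : 'I_n -> 'I_m) (g : 'I_m -> 'I_n) (X : 'M[C]_n) :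
  cancel f g -> cancel g f ->
  pmx f *m X *m adj (pmx f) = \matrix_(r, s) X (g r) (g s).
Proof.
move=> fK gK; rewrite (pmx_lmul _ fK gK).
rewrite -[X in X *m _]adjK -adj_mul (pmx_lmul _ fK gK).
by apply/matrixP => r s; rewrite !mxE conjCK.
Qed.

Lemma isometry_pmx n m (f : 'I_n -> 'I_m) : injective f -> isom (pmx f).
Proof.
move=> inj; rewrite /Defs.isometry adj_pmx_lmul; apply/matrixP => a b.
by rewrite !mxE (inj_eq inj).
Qed.

Lemma pmx_cast n m (e : n = m) :
  pmx (cast_ord e) = castmx (e, erefl) (1%:M : 'M[C]_n).
Proof.
case: m / e; rewrite castmx_id; apply/matrixP => a b.
by rewrite !mxE cast_ord_id.
Qed.

(* The structural isometries alpha, lambda, rho and their inverses are all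
   casts along an equality of dimensions; conjugating by one is a cast. *)
Lemma conj_cast n m (e : n = m) (X : 'M[C]_n) :
  conj_ch (pmx (cast_ord e)) X = castmx (e, e) X.
Proof.
rewrite /conj_ch pmx_cast; case: m / e; rewrite !castmx_id.
by rewrite mul1mx adj1 mulmx1.
Qed.

Lemma conj_cast_inv n m (e : n = m) (e' : m = n) (X : 'M[C]_n) :
  conj_ch (pmx (cast_ord e')) (conj_ch (pmx (cast_ord e)) X) = X.
Proof.
rewrite !conj_cast; apply/matrixP => i j; rewrite !castmxE.
by congr (X _ _); apply: val_inj.
Qed.

Lemma isometry_cast n m (e : n = m) : isom (pmx (cast_ord e) : 'M[C]_(m, n)).
Proof. by apply: isometry_pmx; exact: cast_ord_inj. Qed.

Lemma castA_idx a b c (e : a * (b * c) = a * b * c)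
    (i : 'I_a) (j : 'I_b) (k : 'I_c) :
  cast_ord e (mxtens_index (i, mxtens_index (j, k)))
  = mxtens_index (mxtens_index (i, j), k).
Proof. by apply: val_inj => /=; rewrite mulnDl -mulnA addnA. Qed.

Lemma cast1lV_idx a (e : a = 1 * a) (j : 'I_a) :
  cast_ord e j = mxtens_index (ord0, j).
Proof. by apply: val_inj => /=; rewrite mul0n. Qed.

Lemma cast1r_idx a (e : a * 1 = a) (i : 'I_a) (j : 'I_1) :
  cast_ord e (mxtens_index (i, j)) = i.
Proof. by apply: val_inj => /=; rewrite ord1 muln1 addn0. Qed.

Lemma cast1rV_idx a (e : a = a * 1) (j : 'I_a) :
  cast_ord e j = mxtens_index (j, ord0).
Proof. by apply: val_inj => /=; rewrite muln1 addn0. Qed.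

Lemma conj_alpha_tens a b c (A : 'M[C]_a) (B : 'M[C]_b) (D : 'M[C]_c) :
  conj_ch (alpha_mx a b c) ((A *t B) *t D) = A *t (B *t D).
Proof.
rewrite /alpha_mx conj_cast; apply/matrixP => x y; rewrite castmxE.
case: (mxtens_indexP x) => i x'; case: (mxtens_indexP x') => j k.
case: (mxtens_indexP y) => i' y'; case: (mxtens_indexP y') => j' k'.
by rewrite /= !castA_idx !tensmxE mulrA.
Qed.

Lemma conj_lambda_tens a (M : 'M[C]_1) (A : 'M[C]_a) :
  conj_ch (lambda_mx a) (M *t A) = M 0 0 *: A.
Proof.
rewrite /lambda_mx conj_cast; apply/matrixP => x y.
by rewrite castmxE /= !cast1lV_idx tensmxE mxE.
Qed.

Lemma conj_rho_tens a (M : 'M[C]_1) (A : 'M[C]_a) :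
  conj_ch (rho_mx a) (A *t M) = M 0 0 *: A.
Proof.
rewrite /rho_mx conj_cast; apply/matrixP => x y.
by rewrite castmxE /= !cast1rV_idx tensmxE mxE mulrC.
Qed.

Lemma conj_rhoinv a (A : 'M[C]_a) :
  conj_ch (rho_inv_mx a) A = A *t (1%:M : 'M[C]_1).
Proof.
rewrite /rho_inv_mx conj_cast; apply/matrixP => x y.
case: (mxtens_indexP x) => x' i; case: (mxtens_indexP y) => y' j.
by rewrite castmxE /= !cast1r_idx tensmxE !ord1 mxE mulr1.
Qed.

Lemma conj_tens m n p q (U : 'M[C]_(m, n)) (W : 'M[C]_(p, q)) A B :
  conj_ch (U *t W) (A *t B) = conj_ch U A *t conj_ch W B.
Proof. by rewrite /conj_ch adj_tens !tensmx_mul. Qed.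

Lemma conj_mul m n p (A : 'M[C]_(m, n)) (B : 'M[C]_(n, p)) X :
  conj_ch (A *m B) X = conj_ch A (conj_ch B X).
Proof. by rewrite /conj_ch adj_mul !mulmxA. Qed.

Definition lin n m (Phi : 'M[C]_n -> 'M[C]_m) :=
  forall (c : C) X Y, Phi (c *: X + Y) = c *: Phi X + Phi Y.

Section LinearMap.
Variables (n m : nat) (Phi : 'M[C]_n -> 'M[C]_m).
Hypothesis Phi_lin : lin Phi.

Lemma lin0 : Phi 0 = 0.
Proof.
have h := Phi_lin 1 0 0; rewrite !scale1r addr0 in h.
by apply: (addrI (Phi 0)); rewrite addr0 -h.
Qed.

Lemma linD X Y : Phi (X + Y) = Phi X + Phi Y.
Proof. by move: (Phi_lin 1 X Y); rewrite !scale1r. Qed.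

Lemma linZ c X : Phi (c *: X) = c *: Phi X.
Proof. by rewrite -[c *: X]addr0 Phi_lin lin0 addr0. Qed.

Lemma lin_sum I (r : seq I) (P : pred I) (F : I -> 'M[C]_n) :
  Phi (\sum_(i <- r | P i) F i) = \sum_(i <- r | P i) Phi (F i).
Proof.
elim/big_rec2: _ => [|i y x _ IH]; first by rewrite lin0.
by rewrite linD IH.
Qed.

Lemma lin_decomp X : Phi X = \sum_i \sum_j X i j *: Phi (delta_mx i j).
Proof.
rewrite {1}(matrix_sum_delta X) lin_sum; apply: eq_bigr => i _.
by rewrite lin_sum; apply: eq_bigr => j _; rewrite linZ.
Qed.

End LinearMap.

Lemma lin_ext n m (Phi Psi : 'M[C]_n -> 'M[C]_m) : lin Phi -> lin Psi ->
  (forall i j, Phi (delta_mx i j) = Psi (delta_mx i j)) -> forall X, Phi X = Psi X.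
Proof.
move=> hP hQ E X; rewrite (lin_decomp hP) (lin_decomp hQ).
by apply: eq_bigr => i _; apply: eq_bigr => j _; rewrite E.
Qed.

Lemma lin_ext2 a b m (Phi Psi : 'M[C]_(a * b) -> 'M[C]_m) : lin Phi -> lin Psi ->
  (forall i j k l, Phi (delta_mx i j *t delta_mx k l)
                 = Psi (delta_mx i j *t delta_mx k l)) ->
  forall X, Phi X = Psi X.
Proof.
move=> hP hQ E; apply: lin_ext => // x y.
case: (mxtens_indexP x) => i k; case: (mxtens_indexP y) => j l.
by rewrite -tens_delta E.
Qed.

Lemma lin_ext3 a b c m (Phi Psi : 'M[C]_(a * b * c) -> 'M[C]_m) :
  lin Phi -> lin Psi ->
  (forall i j k l p q, Phi ((delta_mx i j *t delta_mx k l) *t delta_mx p q)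
                     = Psi ((delta_mx i j *t delta_mx k l) *t delta_mx p q)) ->
  forall X, Phi X = Psi X.
Proof.
move=> hP hQ E; apply: lin_ext2 => // x y p q.
case: (mxtens_indexP x) => i k; case: (mxtens_indexP y) => j l.
by rewrite -tens_delta E.
Qed.

Lemma lin_ext4 a b c d m (Phi Psi : 'M[C]_(a * b * c * d) -> 'M[C]_m) :
  lin Phi -> lin Psi ->
  (forall i j k l p q u v,
      Phi (((delta_mx i j *t delta_mx k l) *t delta_mx p q) *t delta_mx u v)
    = Psi (((delta_mx i j *t delta_mx k l) *t delta_mx p q) *t delta_mx u v)) ->
  forall X, Phi X = Psi X.
Proof.
move=> hP hQ E; apply: lin_ext3 => // x y p q u v.
case: (mxtens_indexP x) => i k; case: (mxtens_indexP y) => j l.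
by rewrite -tens_delta E.
Qed.

Lemma lin_id n : lin (fun X : 'M[C]_n => X).
Proof. by []. Qed.

Lemma lin_comp n m k (Phi : 'M[C]_n -> 'M[C]_m) (Psi : 'M[C]_m -> 'M[C]_k) :
  lin Phi -> lin Psi -> lin (fun X => Psi (Phi X)).
Proof. by move=> h1 h2 c X Y; rewrite h1 h2. Qed.

Lemma lin_conj n m (U : 'M[C]_(m, n)) : lin (conj_ch U).
Proof.
by move=> c X Y; rewrite /conj_ch mulmxDr mulmxDl -scalemxAr -scalemxAl.
Qed.

Lemma lin_cp_tens n n' m m' (Phi : 'M[C]_n -> 'M[C]_m) (Psi : 'M[C]_n' -> 'M[C]_m') :
  lin (cp_tens Phi Psi).
Proof.
move=> c X Y; rewrite /cp_tens scaler_sumr -big_split; apply: eq_bigr => i _.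
rewrite scaler_sumr -big_split; apply: eq_bigr => j _.
rewrite scaler_sumr -big_split; apply: eq_bigr => k _.
rewrite scaler_sumr -big_split; apply: eq_bigr => l _.
by rewrite !mxE scalerDl scalerA.
Qed.

Lemma cp_tens_tens n n' m m' (Phi : 'M[C]_n -> 'M[C]_m) (Psi : 'M[C]_n' -> 'M[C]_m') A B :
  lin Phi -> lin Psi -> cp_tens Phi Psi (A *t B) = Phi A *t Psi B.
Proof.
move=> hP hQ; rewrite (lin_decomp hP A) (lin_decomp hQ B) /cp_tens tensmx_suml.
apply: eq_bigr => i _; rewrite tensmx_suml; apply: eq_bigr => j _.
rewrite tensmx_sumr; apply: eq_bigr => k _.
rewrite tensmx_sumr; apply: eq_bigr => l _.
by rewrite tensmxE tensmxZl tensmxZr scalerA.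
Qed.

Lemma cp_tens_id n n' (X : 'M[C]_(n * n')) :
  cp_tens (fun X : 'M[C]_n => X) (fun X : 'M[C]_n' => X) X = X.
Proof.
apply: (lin_ext2 (lin_cp_tens _ _) (@lin_id _)) => i j k l.
by rewrite cp_tens_tens.
Qed.

Lemma cp_tens_ext n n' m m' (f f' : 'M[C]_n -> 'M[C]_m) (g g' : 'M[C]_n' -> 'M[C]_m') :
  (forall X, f X = f' X) -> (forall X, g X = g' X) ->
  forall X, cp_tens f g X = cp_tens f' g' X.
Proof.
move=> Ef Eg X.
have -> : f = f' by apply: functional_extensionality.
by have -> : g = g' by apply: functional_extensionality.
Qed.

(** * The partial trace and the channel of an Aux morphism *)

Definition ptr m e (Y : 'M[C]_(m * e)) : 'M[C]_m :=
  \matrix_(r, s) \sum_(k < e) Y (mxtens_index (r, k)) (mxtens_index (s, k)).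

Definition chanV m e n (V : 'M[C]_(m * e, n)) (X : 'M[C]_n) : 'M[C]_m :=
  ptr (conj_ch V X).

Definition chan n m (f : auxhom n m) := chanV (aux_V f).

Lemma lin_ptr m e : lin (@ptr m e).
Proof.
move=> c X Y; apply/matrixP => r s; rewrite !mxE mulr_sumr -big_split.
by apply: eq_bigr => k _; rewrite !mxE.
Qed.

Lemma lin_chan n m (f : auxhom n m) : lin (chan f).
Proof. by move=> c X Y; rewrite /chan /chanV lin_conj lin_ptr. Qed.

Lemma ptr_tens m e (A : 'M[C]_m) (B : 'M[C]_e) : ptr (A *t B) = \tr B *: A.
Proof.
apply/matrixP => r s; rewrite !mxE mulrC /mxtrace mulr_sumr.
by apply: eq_bigr => k _; rewrite tensmxE.
Qed.

Lemma tr_ptr m e (Y : 'M[C]_(m * e)) : \tr (ptr Y) = \tr Y.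
Proof.
rewrite /mxtrace sum_tens; apply: eq_bigr => r _; rewrite mxE.
by apply: eq_bigr.
Qed.

Definition Jk m e (k : 'I_e) : 'M[C]_(m * e, m) :=
  pmx (fun s => mxtens_index (s, k)).

Lemma ptr_J m e (Y : 'M[C]_(m * e)) :
  ptr Y = \sum_k adj (Jk m k) *m Y *m Jk m k.
Proof.
apply/matrixP => r s; rewrite !mxE summxE; apply: eq_bigr => k _.
by rewrite /Jk pmx_rmul adj_pmx_lmul !mxE.
Qed.

Lemma tens1_Jk m m' e (B : 'M[C]_(m, m')) (k : 'I_e) :
  (B *t 1%:M) *m Jk m' k = Jk m k *m B.
Proof.
apply/matrixP => x s; rewrite /Jk pmx_rmul.
case: (mxtens_indexP x) => r l.
rewrite [in LHS]mxE tensmxE [in RHS]mxE (bigD1 r) //= big1 => [|t ne]; last first.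
  by rewrite !mxE mxtens_index_eq xpair_eqE eq_sym (negbTE ne) mul0r.
rewrite !mxE mxtens_index_eq xpair_eqE eqxx /= addr0.
by case: (l == k); rewrite ?mulr1 ?mul1r ?mulr0 ?mul0r.
Qed.

Lemma ptr_mul m m' e (A : 'M[C]_(m', m)) (Z : 'M[C]_(m * e)) (B : 'M[C]_(m, m')) :
  ptr ((A *t (1%:M : 'M_e)) *m Z *m (B *t 1%:M)) = A *m ptr Z *m B.
Proof.
have adjJ (k : 'I_e) : adj (Jk m' k) *m (A *t 1%:M) = A *m adj (Jk m k).
  apply: (can_inj (@adjK _ _)); rewrite !adj_mul adj_tens adj1 !adjK.
  exact: tens1_Jk.
rewrite !ptr_J mulmx_sumr mulmx_suml; apply: eq_bigr => k _.
by rewrite -!mulmxA tens1_Jk !mulmxA adjJ.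
Qed.

Lemma ptr_assoc a b c (Y : 'M[C]_(a * b * c)) :
  ptr (castmx (esym (mulnA a b c), esym (mulnA a b c)) Y) = ptr (ptr Y).
Proof.
apply/matrixP => r s; rewrite !mxE sum_tens; apply: eq_bigr => j _.
rewrite !mxE; apply: eq_bigr => k _.
by rewrite castmxE !castA_idx.
Qed.

(* The partial trace does not see isometries acting on the environment:
   this is why channels are invariant under the preorder |> of Aux. *)
Lemma ptr_iso m e e' (h : 'M[C]_(e', e)) (Z : 'M[C]_(m * e)) :
  isom h -> ptr (conj_ch ((1%:M : 'M_m) *t h) Z) = ptr Z.
Proof.
move=> hh; apply: (@lin_ext2 m e m (fun Z => ptr (conj_ch (1%:M *t h) Z)) (@ptr m e)).
- exact: lin_comp (lin_conj _) (@lin_ptr _ _).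
- exact: lin_ptr.
move=> i j k l; rewrite conj_tens !ptr_tens /conj_ch adj1 mulmx1 mul1mx.
by rewrite mxtrace_mulC mulmxA hh mul1mx.
Qed.

Lemma theta_idx b e b' e' (i : 'I_b) (j : 'I_e) (k : 'I_b') (l : 'I_e') :
  @theta_fun b e b' e' (mxtens_index (mxtens_index (i, j), mxtens_index (k, l)))
  = mxtens_index (mxtens_index (i, k), mxtens_index (j, l)).
Proof. by rewrite /theta_fun !mxtens_indexK. Qed.

Lemma thetaK b e b' e' : cancel (@theta_fun b e b' e') (@theta_fun b b' e e').
Proof.
move=> s; case: (mxtens_indexP s) => x y.
case: (mxtens_indexP x) => i j; case: (mxtens_indexP y) => k l.
by rewrite !theta_idx.
Qed.

Lemma isometry_theta b e b' e' : isom (theta_mx b e b' e').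
Proof. by apply: isometry_pmx; exact: can_inj (@thetaK _ _ _ _). Qed.

Lemma ptr_theta b e b' e' (Y : 'M[C]_(b * e)) (Y' : 'M[C]_(b' * e')) :
  ptr (conj_ch (theta_mx b e b' e') (Y *t Y')) = ptr Y *t ptr Y'.
Proof.
rewrite /conj_ch /theta_mx (conj_pmx_bij _ (@thetaK _ _ _ _) (@thetaK _ _ _ _)).
apply/matrixP => x y.
case: (mxtens_indexP x) => i i'; case: (mxtens_indexP y) => j j'.
rewrite tensmxE [LHS]mxE sum_tens [ptr Y _ _]mxE [ptr Y' _ _]mxE mulr_suml.
apply: eq_bigr => k _; rewrite mulr_sumr; apply: eq_bigr => k' _.
by rewrite mxE !theta_idx tensmxE.
Qed.

Lemma chan_id n (X : 'M[C]_n) : chan (aux_id n) X = X.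
Proof. by rewrite /chan /chanV conj_rhoinv ptr_tens mxtrace1 scale1r. Qed.

Lemma chan_emb n m (U : 'M[C]_(m, n)) X : chan (aux_emb U) X = conj_ch U X.
Proof. by rewrite /chan /chanV conj_mul conj_rhoinv ptr_tens mxtrace1 scale1r. Qed.

Lemma chan_comp n m k (g : auxhom m k) (f : auxhom n m) X :
  chan (aux_comp g f) X = chan g (chan f X).
Proof.
rewrite /chan /chanV /= !conj_mul /alpha_mx conj_cast ptr_assoc.
by rewrite {1}/conj_ch adj_tens adj1 ptr_mul.
Qed.

Lemma chan_tens n n' m m' (f : auxhom n m) (f' : auxhom n' m') X :
  chan (aux_tens f f') X = cp_tens (chan f) (chan f') X.
Proof.
apply: (lin_ext2 (lin_chan _) (lin_cp_tens _ _)) => i j k l.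
rewrite cp_tens_tens; try exact: lin_chan.
by rewrite /chan /chanV /= conj_mul conj_tens ptr_theta.
Qed.

Lemma valid_aux_id n : aux_valid (aux_id n).
Proof. exact: isometry_cast. Qed.

Lemma valid_aux_emb n m (U : 'M[C]_(m, n)) : isom U -> aux_valid (aux_emb U).
Proof. by move=> hU; apply: isometry_mul => //; exact: isometry_cast. Qed.

Lemma valid_aux_comp n m k (g : auxhom m k) (f : auxhom n m) :
  aux_valid g -> aux_valid f -> aux_valid (aux_comp g f).
Proof.
move=> hg hf; rewrite /aux_valid /=; apply: isometry_mul => //.
apply: isometry_mul; first exact: isometry_cast.
by apply: isometry_tens => //; exact: isometry1.
Qed.

Lemma valid_aux_tens n n' m m' (f : auxhom n m) (f' : auxhom n' m') :
  aux_valid f -> aux_valid f' -> aux_valid (aux_tens f f').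
Proof.
move=> hf hf'; apply: isometry_mul; first exact: isometry_theta.
exact: isometry_tens.
Qed.

(** * Positivity; channels of Aux morphisms are CPTP *)

Lemma psd0 n : psd (0 : 'M[C]_n).
Proof. by move=> x; rewrite mulmx0 mul0mx mxE. Qed.

Lemma psdD n (P Q : 'M[C]_n) : psd P -> psd Q -> psd (P + Q).
Proof. by move=> hP hQ x; rewrite mulmxDr mulmxDl mxE; exact: addr_ge0. Qed.

Lemma psd_sum n I (r : seq I) (F : I -> 'M[C]_n) :
  (forall i, psd (F i)) -> psd (\sum_(i <- r) F i).
Proof. by move=> h; elim/big_ind: _ => //; [exact: psd0 | exact: psdD]. Qed.

Lemma psd_conj n m (W : 'M[C]_(m, n)) (P : 'M[C]_n) :
  psd P -> psd (conj_ch W P).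
Proof. by move=> hP x; have := hP (adj W *m x); rewrite adj_mul adjK !mulmxA. Qed.

Lemma adj_vec_ge0 n (x : 'cV[C]_n) : 0 <= (adj x *m x) 0 0.
Proof.
rewrite mxE; apply: sumr_ge0 => i _; rewrite !mxE mulrC.
exact: mul_conjC_ge0.
Qed.

Lemma psd_gram m n (B : 'M[C]_(m, n)) : psd (B *m adj B).
Proof.
move=> x; have -> : adj x *m (B *m adj B) *m x = adj (adj B *m x) *m (adj B *m x).
  by rewrite adj_mul adjK !mulmxA.
exact: adj_vec_ge0.
Qed.

Definition blk k n (P : 'M[C]_(k * n)) (i j : 'I_k) : 'M[C]_n :=
  \matrix_(a, b) P (mxtens_index (i, a)) (mxtens_index (j, b)).

Lemma block_decomp k n (P : 'M[C]_(k * n)) :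
  P = \sum_i \sum_j delta_mx i j *t blk P i j.
Proof.
rewrite -{1}[P]cp_tens_id /cp_tens; apply: eq_bigr => i _; apply: eq_bigr => j _.
rewrite [blk P i j]matrix_sum_delta tensmx_sumr; apply: eq_bigr => a _.
rewrite tensmx_sumr; apply: eq_bigr => b _.
by rewrite tensmxZr mxE.
Qed.

Lemma ampl_conj k n m (K : 'M[C]_(m, n)) (P : 'M[C]_(k * n)) :
  ampl (conj_ch K) P = conj_ch ((1%:M : 'M_k) *t K) P.
Proof.
rewrite {2}[P]block_decomp /ampl (lin_sum (lin_conj _)).
apply: eq_bigr => i _; rewrite (lin_sum (lin_conj _)); apply: eq_bigr => j _.
by rewrite conj_tens /conj_ch adj1 mulmx1 mul1mx.
Qed.

Lemma ampl_sum k n m I (r : seq I) (F : I -> 'M[C]_n -> 'M[C]_m) (P : 'M[C]_(k * n)) :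
  ampl (fun X => \sum_(c <- r) F c X) P = \sum_(c <- r) ampl (F c) P.
Proof.
rewrite /ampl; under eq_bigr do under eq_bigr do rewrite tensmx_sumr.
under eq_bigr do rewrite exchange_big /=.
by rewrite exchange_big.
Qed.

Definition kraus m e n (V : 'M[C]_(m * e, n)) (k : 'I_e) : 'M[C]_(m, n) :=
  adj (Jk m k) *m V.

Lemma chanV_kraus m e n (V : 'M[C]_(m * e, n)) X :
  chanV V X = \sum_k conj_ch (kraus V k) X.
Proof.
rewrite /chanV ptr_J; apply: eq_bigr => k _.
by rewrite /kraus /conj_ch adj_mul adjK !mulmxA.
Qed.

Lemma cptp_ext n m (Phi Psi : 'M[C]_n -> 'M[C]_m) :
  (forall X, Phi X = Psi X) -> cptp Psi -> cptp Phi.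
Proof. by move=> E; have -> : Phi = Psi by apply: functional_extensionality. Qed.

Lemma cptp_lin n m (Phi : 'M[C]_n -> 'M[C]_m) : cptp Phi -> lin Phi.
Proof. by case. Qed.

Lemma cptp_chan n m (f : auxhom n m) : aux_valid f -> cptp (chan f).
Proof.
move=> hV; split; first exact: lin_chan.
  by move=> X; rewrite /chan /chanV tr_ptr /conj_ch mxtrace_mulC mulmxA hV mul1mx.
move=> k P hP.
have -> : ampl (chan f) P = \sum_c ampl (conj_ch (kraus (aux_V f) c)) P.
  rewrite -ampl_sum; congr (ampl _ P); apply: functional_extensionality => X.
  exact: chanV_kraus.
by apply: psd_sum => c; rewrite ampl_conj; exact: psd_conj.
Qed.

Definition ev n (a : 'I_n) : 'cV[C]_n := delta_mx a 0.

Lemma form_ev n (P : 'M[C]_n) a b : (adj (ev a) *m P *m ev b) 0 0 = P a b.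
Proof. by rewrite /ev adj_delta -rowE -colE !mxE. Qed.

Lemma ev_adj n (a b : 'I_n) : ev a *m adj (ev b) = delta_mx a b.
Proof. by rewrite /ev adj_delta mul_delta_mx. Qed.

Lemma form_expand n (P : 'M[C]_n) (u v : 'cV[C]_n) (c : C) :
  (adj (u + c *: v) *m P *m (u + c *: v)) 0 0 =
  (adj u *m P *m u) 0 0 + c * (adj u *m P *m v) 0 0
  + c^* * (adj v *m P *m u) 0 0 + c^* * c * (adj v *m P *m v) 0 0.
Proof.
rewrite adjD adjZ !mulmxDl !mulmxDr -!scalemxAl -!scalemxAr !mxE.
ring.
Qed.

Lemma psd_real n (P : 'M[C]_n) (x : 'cV[C]_n) :
  psd P -> ((adj x *m P *m x) 0 0)^* = (adj x *m P *m x) 0 0.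
Proof. by move=> hP; apply: conj_Creal; apply: ger0_real. Qed.

(* A complex matrix with real quadratic form is hermitian: compare the
   forms along e_a + e_b and e_a + i e_b. *)
Lemma psd_herm n (P : 'M[C]_n) : psd P -> adj P = P.
Proof.
move=> hP; apply/matrixP => a b; rewrite adjE.
have ra := psd_real (ev a) hP; have rb := psd_real (ev b) hP.
rewrite !form_ev in ra rb.
set p := P a b; set q := P b a.
have c1 : P a a + p^* + q^* + P b b = P a a + p + q + P b b.
  have := @psd_real n P (ev a + 1 *: ev b) hP.
  rewrite form_expand !form_ev rmorph1 !mul1r.
  by rewrite !rmorphD /= ra rb.
have ii : 'i * 'i = -1 :> C by rewrite -expr2 sqrCi.
have c2 : P a a - 'i * p^* + 'i * q^* + P b b = P a a + 'i * p - 'i * q + P b b.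
  have := @psd_real n P (ev a + 'i *: ev b) hP.
  rewrite form_expand !form_ev conjCi !mulNr ii mulN1r opprK.
  by rewrite !rmorphD !rmorphN !rmorphM /= conjCi ra rb !mulNr opprK.
have E : 2 * (p^* - q) = (P a a + p^* + q^* + P b b - (P a a + p + q + P b b))
   + 'i * (P a a - 'i * p^* + 'i * q^* + P b b - (P a a + 'i * p - 'i * q + P b b))
   + (1 + 'i * 'i) * (p^* - q^* + p - q) by ring.
rewrite c1 c2 !subrr mulr0 !add0r ii subrr mul0r in E.
move/eqP: E; rewrite mulf_eq0 pnatr_eq0 /= subr_eq0 => /eqP E.
by rewrite -E conjCK.
Qed.

Lemma adj_diag n (d : 'rV[C]_n) : adj (diag_mx d) = diag_mx (\row_i (d 0 i)^*).
Proof.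
apply/matrixP => i j; rewrite adjE !mxE; have [->|ne] := eqVneq i j.
  by rewrite !mulr1n.
by rewrite !mulr0n ?rmorph0.
Qed.

(* Spectral theorem for hermitian matrices, from the library's spectral
   theorem for normal matrices. *)
Lemma spectral_herm n (P : 'M[C]_n) : adj P = P ->
  exists (Q : 'M[C]_n) (d : 'rV[C]_n),
    [/\ Q *m adj Q = 1%:M, adj Q *m Q = 1%:M & P = adj Q *m diag_mx d *m Q].
Proof.
have adj_tc m k (A : 'M[C]_(m, k)) : adj A = map_mx Num.conj (A^T).
  by rewrite /adj map_trmx.
move=> hP.
have hn : P \is spectral.normalmx.
  by apply/spectral.normalmxP; rewrite -adj_tc hP.
move/spectral.orthomx_spectralP: hn => E.
have inv := spectral.invmx_unitary (spectral.spectral_unitarymx P).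
have u1 : spectral.spectralmx P *m adj (spectral.spectralmx P) = 1%:M.
  by rewrite adj_tc; apply/spectral.unitarymxP; exact: spectral.spectral_unitarymx.
exists (spectral.spectralmx P), (spectral.spectral_diag P); split => //.
  exact: mulmx1C.
by rewrite {1}E inv -adj_tc.
Qed.

Lemma spectral_psd n (P : 'M[C]_n) : psd P ->
  exists (Q : 'M[C]_n) (d : 'rV[C]_n),
    [/\ Q *m adj Q = 1%:M, adj Q *m Q = 1%:M, P = adj Q *m diag_mx d *m Q
      & forall i, 0 <= d 0 i].
Proof.
move=> hP; have [Q [d [u1 u2 E]]] := spectral_herm (psd_herm hP).
exists Q, d; split => // i.
have -> : d 0 i = (Q *m P *m adj Q) i i.
  by rewrite E !mulmxA u1 mul1mx -mulmxA u1 mulmx1 mxE eqxx mulr1n.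
have h := hP (adj Q *m ev i); rewrite adj_mul adjK in h.
by rewrite -form_ev; rewrite !mulmxA in h *.
Qed.

Lemma psd_factor n (P : 'M[C]_n) : psd P -> exists K : 'M[C]_n, P = K *m adj K.
Proof.
move=> hP; have [Q [d [u1 u2 E hd]]] := spectral_psd hP.
pose s : 'rV[C]_n := \row_i sqrtC (d 0 i).
exists (adj Q *m diag_mx s).
rewrite adj_mul adjK adj_diag -!mulmxA [diag_mx s *m _]mulmxA mulmx_diag E !mulmxA.
congr (_ *m _); congr (_ *m _); congr diag_mx; apply/rowP => i; rewrite !mxE.
have hr : (sqrtC (d 0 i))^* = sqrtC (d 0 i).
  by apply: conj_Creal; apply: ger0_real; rewrite sqrtC_ge0.
by rewrite hr -expr2 sqrtCK.
Qed.

(** * Stinespring dilation: every CPTP map is a channel (F is full) *)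

Definition choi n m (Phi : 'M[C]_n -> 'M[C]_m) : 'M[C]_(n * m) :=
  \sum_i \sum_j delta_mx i j *t Phi (delta_mx i j).

(* the unnormalised maximally entangled vector sum_i e_i (x) e_i *)
Definition omega_vec n : 'cV[C]_(n * n) :=
  \matrix_(x, _) (((mxtens_unindex x).1 == (mxtens_unindex x).2)%:R).

(* Choi's theorem (easy half): the Choi matrix of a CP map is psd, being the
   image of the psd matrix omega omega^* under id_n (x) Phi. *)
Lemma choi_psd n m (Phi : 'M[C]_n -> 'M[C]_m) : cptp Phi -> psd (choi Phi).
Proof.
case=> _ _ cp.
have -> : choi Phi = ampl Phi (omega_vec n *m adj (omega_vec n)).
  rewrite /ampl /choi; apply: eq_bigr => i _; apply: eq_bigr => j _.
  congr (_ *t Phi _); apply/matrixP => a b.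
  rewrite !mxE big_ord1 !mxE !mxtens_indexK /= rmorph_nat -natrM mulnb.
  by rewrite [a == i]eq_sym [b == j]eq_sym.
by apply: cp; exact: psd_gram.
Qed.

Lemma choi_entry n m (Phi : 'M[C]_n -> 'M[C]_m) s r s' r' :
  choi Phi (mxtens_index (s, r)) (mxtens_index (s', r')) = Phi (delta_mx s s') r r'.
Proof.
transitivity (\sum_i \sum_j ((i == s) && (j == s'))%:R * Phi (delta_mx i j) r r').
  rewrite summxE; apply: eq_bigr => i _; rewrite summxE; apply: eq_bigr => j _.
  by rewrite tensmxE mxE [s == i]eq_sym [s' == j]eq_sym.
rewrite (bigD1 s) //= (bigD1 s') //= !eqxx /= mul1r big1 ?addr0; last first.
  by move=> j /negbTE ->; rewrite mul0r.
by rewrite big1 ?addr0 // => i /negbTE ne; rewrite big1 // => j _; rewrite ne mul0r.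
Qed.

Lemma tr_delta n (i j : 'I_n) : \tr (delta_mx i j : 'M[C]_n) = (i == j)%:R.
Proof.
rewrite /mxtrace (bigD1 i) //= big1 => [|k ne]; last by rewrite mxE (negbTE ne).
by rewrite mxE eqxx addr0.
Qed.

(* Factor choi Phi = K K^*; reshaping K gives V : C^n -> C^m (x) C^(nm) with
   chan V = Phi, and trace preservation makes V an isometry. *)
Lemma stinespring n m (Phi : 'M[C]_n -> 'M[C]_m) : cptp Phi ->
  exists f : auxhom n m, aux_valid f /\ forall X, chan f X = Phi X.
Proof.
move=> hc; have [hl htr _] := hc.
have [K EK] := psd_factor (choi_psd hc).
pose V : 'M[C]_(m * (n * m), n) :=
  \matrix_(x, s) K (mxtens_index (s, (mxtens_unindex x).1)) (mxtens_unindex x).2.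
have VE r k s : V (mxtens_index (r, k)) s = K (mxtens_index (s, r)) k.
  by rewrite mxE mxtens_indexK.
clearbody V.
have JE s r s' r' : Phi (delta_mx s s') r r' =
    \sum_k K (mxtens_index (s, r)) k * (K (mxtens_index (s', r')) k)^*.
  by rewrite -choi_entry EK mxE; apply: eq_bigr => k _; rewrite adjE.
exists (AuxHom _ V); split.
  rewrite /aux_valid /= /Defs.isometry; apply/matrixP => s s'.
  rewrite !mxE sum_tens eq_sym -tr_delta -htr.
  rewrite /mxtrace; apply: eq_bigr => r _; rewrite JE.
  by apply: eq_bigr => k _; rewrite adjE !VE mulrC.
move=> X; rewrite /chan /chanV /conj_ch /= (lin_decomp hl X); apply/matrixP => r r'.
rewrite !mxE !summxE.
under [RHS]eq_bigr do rewrite summxE.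
under [RHS]eq_bigr do under eq_bigr do rewrite mxE JE mulr_sumr.
under [RHS]eq_bigr do rewrite exchange_big /=.
rewrite [RHS]exchange_big /=; apply: eq_bigr => k _.
rewrite mxE.
under [LHS]eq_bigr => t _ do rewrite mxE mulr_suml.
rewrite exchange_big /=; apply: eq_bigr => s _; apply: eq_bigr => t _.
by rewrite adjE !VE; ring.
Qed.

(** * Uniqueness of purification *)

Lemma diag_kill m k (d : 'rV[C]_m) (M : 'M[C]_(m, k)) :
  M *m adj M = diag_mx d -> diag_mx (\row_i ((d 0 i != 0)%:R)) *m M = M.
Proof.
move=> E; rewrite mul_diag_mx; apply/matrixP => i j; rewrite !mxE.
have [d0|] := eqP; last by rewrite mul1r.
rewrite mul0r; apply/esym/eqP; rewrite -mul_conjC_eq0; apply/eqP.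
have : (M *m adj M) i i = 0 by rewrite E mxE eqxx mulr1n d0.
rewrite mxE => hs.
have := @psumr_eq0P _ _ xpredT (fun l => M i l * adj M l i).
move=> /(_ _ hs j isT); rewrite adjE; apply => l _.
by rewrite adjE; exact: mul_conjC_ge0.
Qed.

(* Diagonal case: if A A^* = B B^* = diag d (d real), then
   h = [A^* d^-1 B, 1 - A^* d^-1 A] is a coisometry with A h = [B 0]. *)
Lemma purif_diag m e e' (d : 'rV[C]_m) (A : 'M[C]_(m, e)) (B : 'M[C]_(m, e')) :
  (forall i, (d 0 i)^* = d 0 i) ->
  A *m adj A = diag_mx d -> B *m adj B = diag_mx d ->
  exists h : 'M[C]_(e, e' + e), h *m adj h = 1%:M /\ A *m h = row_mx B 0.
Proof.
move=> dr DA DB.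
pose Dinv := diag_mx (\row_i (d 0 i)^-1).
pose Pi := diag_mx (\row_i ((d 0 i != 0)%:R : C)).
have DDinv : diag_mx d *m Dinv = Pi.
  rewrite mulmx_diag; congr diag_mx; apply/rowP => i; rewrite !mxE.
  have [->|nz] := eqVneq (d 0 i) 0; first by rewrite mul0r.
  by rewrite mulfV // nz.
have DinvD : Dinv *m diag_mx d *m Dinv = Dinv.
  rewrite !mulmx_diag; congr diag_mx; apply/rowP => i; rewrite !mxE.
  have [->|nz] := eqVneq (d 0 i) 0; first by rewrite invr0 !mulr0.
  by rewrite mulVf // mul1r.
have aDinv : adj Dinv = Dinv.
  by rewrite adj_diag; congr diag_mx; apply/rowP => i; rewrite !mxE fmorphV /= dr.
pose h := adj A *m Dinv *m B.
pose P := adj A *m Dinv *m A.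
have Ah : A *m h = B by rewrite /h !mulmxA DA DDinv (diag_kill DB).
have AP : A *m P = A by rewrite /P !mulmxA DA DDinv (diag_kill DA).
have aP : adj P = P by rewrite /P !adj_mul adjK aDinv mulmxA.
have PP : P *m P = P.
  rewrite /P !mulmxA -(mulmxA _ A (adj A)) DA -!mulmxA.
  by rewrite [Dinv *m (diag_mx d *m _)]mulmxA [Dinv *m _ *m _]mulmxA DinvD.
have hh : h *m adj h = P.
  rewrite /h /P !adj_mul adjK aDinv !mulmxA -(mulmxA _ B) DB -!mulmxA.
  by rewrite [Dinv *m (diag_mx d *m _)]mulmxA [Dinv *m _ *m _]mulmxA DinvD.
exists (row_mx h (1%:M - P)); split.
  rewrite adj_row mul_row_col hh adjB adj1 aP mulmxBl mul1mx mulmxBr mulmx1 PP.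
  by rewrite subrr subr0 addrC subrK.
by rewrite mul_mx_row Ah mulmxBr mulmx1 AP subrr.
Qed.

(* Two factorisations A A^* = B B^* of the same operator differ by a
   coisometry padded with zeros: A h = [B 0].  Reduce to the diagonal case
   by diagonalising A A^*. *)
Lemma purif_mx m e e' (A : 'M[C]_(m, e)) (B : 'M[C]_(m, e')) :
  A *m adj A = B *m adj B ->
  exists h : 'M[C]_(e, e' + e), h *m adj h = 1%:M /\ A *m h = row_mx B 0.
Proof.
move=> EAB; have [Q [d [u1 u2 E hd]]] := spectral_psd (psd_gram A).
have dr i : (d 0 i)^* = d 0 i by apply: conj_Creal; apply: ger0_real.
have gram_diag k (M : 'M[C]_(m, k)) : M *m adj M = A *m adj A ->
    (Q *m M) *m adj (Q *m M) = diag_mx d.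
  move=> EM; rewrite adj_mul !mulmxA -(mulmxA Q) EM E !mulmxA u1 mul1mx.
  by rewrite -mulmxA u1 mulmx1.
have [h [hh Eh]] := purif_diag dr (gram_diag _ _ erefl) (gram_diag _ _ (esym EAB)).
exists h; split => //.
have -> : A = adj Q *m (Q *m A) by rewrite mulmxA u2 mul1mx.
by rewrite -mulmxA Eh mul_mx_row mulmx0 mulmxA u2 mul1mx.
Qed.

(* A state [s, E] : I -> m is a column vector in C^m (x) C^E, i.e. an
   m x E matrix; its channel image is the Gram matrix of that matrix. *)
Definition unvec m e (V : 'M[C]_(m * e, 1)) : 'M[C]_(m, e) :=
  \matrix_(r, k) V (mxtens_index (r, k)) 0.

Lemma unvec_inj m e : injective (@unvec m e).
Proof.
move=> V W E; apply/matrixP => x j; rewrite [j]ord1.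
case: (mxtens_indexP x) => r k.
by have := congr1 (fun M : 'M[C]_(m, e) => M r k) E; rewrite !mxE.
Qed.

Lemma unvec_mul m e e' (h : 'M[C]_(e', e)) (V : 'M[C]_(m * e, 1)) :
  unvec (((1%:M : 'M_m) *t h) *m V) = unvec V *m h^T.
Proof.
apply/matrixP => r k'; rewrite !mxE sum_tens (bigD1 r) //= [X in _ + X]big1.
  rewrite addr0; apply: eq_bigr => l _.
  by rewrite tensmxE !mxE eqxx mul1r mulrC.
move=> t ne; rewrite big1 // => l _.
by rewrite tensmxE mxE eq_sym (negbTE ne) !mul0r.
Qed.

Lemma chan_state m (s : auxhom 1 m) :
  chan s 1%:M = unvec (aux_V s) *m adj (unvec (aux_V s)).
Proof.
rewrite /chan /chanV /conj_ch mulmx1; apply/matrixP => r r'.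
rewrite !mxE; apply: eq_bigr => k _.
by rewrite mxE big_ord1 !adjE !mxE.
Qed.

(* Purification: two states of Aux with the same channel image (the same
   density matrix) are ~-equivalent, both being |>-below a common dilation. *)
Lemma purif_state m (s t : auxhom 1 m) : aux_valid s -> aux_valid t ->
  chan s 1%:M = chan t 1%:M -> aux_sim s t.
Proof.
move=> vs vt; rewrite !chan_state => E.
have [h [hh Eh]] := purif_mx E.
pose g : 'M[C]_(aux_e t + aux_e s, aux_e t) := col_mx 1%:M 0.
have gi : isom g.
  by rewrite /Defs.isometry /g adj_col mul_row_col adj1 adj0 mulmx1 mulmx0 addr0.
pose W := AuxHom (aux_e t + aux_e s) ((1%:M *t g) *m aux_V t).
have vW : aux_valid W.
  by apply: isometry_mul => //; apply: isometry_tens => //; exact: isometry1.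
have tW : aux_pre t W by split => //; split => //; exists g.
have sW : aux_pre s W.
  split => //; split => //; exists h^T; split; first exact: isometry_tr.
  apply: unvec_inj; rewrite !unvec_mul trmxK Eh /g tr_col_mx trmx1 trmx0.
  by rewrite mul_mx_row mulmx1 mulmx0.
by apply: (@rst_trans _ _ s W t); [exact: rst_step | apply: rst_sym; exact: rst_step].
Qed.

Lemma pre_chan n m (f g : auxhom n m) :
  aux_pre f g -> forall X, chan f X = chan g X.
Proof.
by move=> [_ [_ [h [hh E]]]] X; rewrite /chan /chanV -E conj_mul ptr_iso.
Qed.

Lemma sim_chan n m (f g : auxhom n m) :
  aux_sim f g -> forall X, chan f X = chan g X.
Proof.
elim => [x y /pre_chan //|x X //|x y _ IH X|x y z _ IH1 _ IH2 X].
  by rewrite IH.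
by rewrite IH1 IH2.
Qed.

(** * Linear maps are determined by their values on pure states *)

Lemma vec_eq0 n (v : 'cV[C]_n) : (adj v *m v) 0 0 = 0 -> v = 0.
Proof.
move=> v0; apply/matrixP => i j; rewrite [j]ord1 mxE.
have hnn l : xpredT l -> 0 <= adj v 0 l * v l 0.
  by move=> _; rewrite adjE mulrC mul_conjC_ge0.
rewrite mxE in v0.
have h := @psumr_eq0P _ _ xpredT (fun l => adj v 0 l * v l 0) hnn v0 i isT.
by apply/eqP; rewrite -mul_conjC_eq0 mulrC -adjE h.
Qed.

Lemma vec_normalize n (v : 'cV[C]_n) : (adj v *m v) 0 0 != 0 ->
  exists (c : C) (u : 'cV[C]_n), isom u /\ v *m adj v = c *: (u *m adj u).
Proof.
move=> qnz; pose q := (adj v *m v) 0 0; pose sq := sqrtC q.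
have sq0 : 0 <= sq by rewrite sqrtC_ge0; exact: adj_vec_ge0.
have sqr : sq^* = sq by apply: conj_Creal; apply: ger0_real.
have sqnz : sq != 0 by rewrite sqrtC_eq0.
have sq2 : sq * sq = q by rewrite -expr2 sqrtCK.
exists (sq * sq), (sq^-1 *: v); split.
  rewrite /Defs.isometry adjZ -scalemxAl -scalemxAr scalerA; apply/matrixP => i j.
  rewrite !ord1 [LHS]mxE -/q fmorphV /= sqr [RHS]mxE eqxx mulr1n -sq2.
  by field.
rewrite adjZ -scalemxAl -scalemxAr !scalerA fmorphV /= sqr.
have -> : sq * sq / sq / sq = 1 by field.
by rewrite scale1r.
Qed.

Lemma lin_eq_on_rank_one n m (Phi Psi : 'M[C]_n -> 'M[C]_m) : lin Phi -> lin Psi ->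
  (forall u : 'cV[C]_n, isom u -> Phi (u *m adj u) = Psi (u *m adj u)) ->
  forall v : 'cV[C]_n, Phi (v *m adj v) = Psi (v *m adj v).
Proof.
move=> hP hQ E v; have [qz|qnz] := eqVneq ((adj v *m v) 0 0) 0.
  by rewrite (vec_eq0 qz) mul0mx !lin0.
by have [c [u [hu ->]]] := vec_normalize qnz; rewrite !linZ // E.
Qed.

(* Polarisation: the matrix unit E_ab is a combination of the rank-one
   operators of e_a, e_b, e_a + e_b and e_a + i e_b. *)
Lemma lin_eq_on_pure_states n m (Phi Psi : 'M[C]_n -> 'M[C]_m) : lin Phi -> lin Psi ->
  (forall u : 'cV[C]_n, isom u -> Phi (u *m adj u) = Psi (u *m adj u)) ->
  forall X, Phi X = Psi X.
Proof.
move=> hP hQ E0; have E := lin_eq_on_rank_one hP hQ E0.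
pose D X := Phi X - Psi X.
have hD : lin D by move=> c X Y; rewrite /D hP hQ scalerBr opprD addrACA.
have Dv (v : 'cV[C]_n) : D (v *m adj v) = 0 by rewrite /D /= E subrr.
have Dd a : D (delta_mx a a) = 0 by rewrite -ev_adj Dv.
have vec_expand a b (w : C) : (ev a + w *: ev b) *m adj (ev a + w *: ev b) =
    delta_mx a a + w^* *: delta_mx a b + w *: delta_mx b a
    + (w * w^*) *: delta_mx b b.
  rewrite adjD adjZ mulmxDl !mulmxDr -!scalemxAl -!scalemxAr !ev_adj scalerA.
  by rewrite !addrA [w * _]mulrC.
apply: lin_ext => // a b; apply/eqP; rewrite -subr_eq0; apply/eqP.
have h1 := Dv (ev a + 1 *: ev b).
have h2 := Dv (ev a + 'i *: ev b).
rewrite vec_expand !(linD hD) !(linZ hD) !Dd !scaler0 !addr0 add0r in h1.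
rewrite vec_expand !(linD hD) !(linZ hD) !Dd !scaler0 !addr0 add0r in h2.
rewrite rmorph1 !scale1r in h1; rewrite conjCi in h2.
have ey : D (delta_mx b a) = - D (delta_mx a b).
  by apply/eqP; rewrite -addr_eq0 addrC h1.
rewrite ey scalerN scaleNr -opprD in h2; move/eqP: h2; rewrite oppr_eq0 -scalerDl.
rewrite scaler_eq0 => /orP[|/eqP //].
by rewrite -mulr2n mulrn_eq0 /= (negbTE (neq0Ci _)).
Qed.

(** * Ext-equality is equality of channels (F is well defined and faithful) *)

(* Pure states u : I -> n are the isometries [u, I]; testing f ~~ g on them
   shows that chan f and chan g agree on all pure states. *)
Lemma ext_chan n m (f g : auxhom n m) : ext_eq f g -> forall X, chan f X = chan g X.
Proof.
move=> he; apply: lin_eq_on_pure_states; [exact: lin_chan | exact: lin_chan |].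
move=> u hu; have := sim_chan (he (aux_emb u) (valid_aux_emb hu)) 1%:M.
by rewrite !chan_comp chan_emb /conj_ch mulmx1.
Qed.

(* Conversely, equal channels give states f a, g a with the same density
   matrix, hence ~-equivalent by uniqueness of purification. *)
Lemma chan_ext n m (f g : auxhom n m) : aux_valid f -> aux_valid g ->
  (forall X, chan f X = chan g X) -> ext_eq f g.
Proof.
move=> vf vg E a va; apply: purif_state; try exact: valid_aux_comp.
by rewrite !chan_comp E.
Qed.

(** * CPTP is a monoidal category *)

(* Closure properties, all obtained through Stinespring representations. *)
Lemma cptp_id n : cptp (fun X : 'M[C]_n => X).
Proof.
apply: (cptp_ext (Psi := chan (aux_id n))); first by move=> X; rewrite chan_id.
exact: cptp_chan (valid_aux_id n).
Qed.

Lemma cptp_conj n m (U : 'M[C]_(m, n)) : isom U -> cptp (conj_ch U).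
Proof.
move=> hU; apply: (cptp_ext (Psi := chan (aux_emb U))).
  by move=> X; rewrite chan_emb.
exact: cptp_chan (valid_aux_emb hU).
Qed.

Lemma cptp_comp n m k (Phi : 'M[C]_n -> 'M[C]_m) (Psi : 'M[C]_m -> 'M[C]_k) :
  cptp Phi -> cptp Psi -> cptp (fun X => Psi (Phi X)).
Proof.
move=> /stinespring [f [vf Ef]] /stinespring [g [vg Eg]].
apply: (cptp_ext (Psi := chan (aux_comp g f))).
  by move=> X; rewrite chan_comp Ef Eg.
exact: cptp_chan (valid_aux_comp vg vf).
Qed.

Lemma cptp_tens n n' m m' (Phi : 'M[C]_n -> 'M[C]_m) (Psi : 'M[C]_n' -> 'M[C]_m') :
  cptp Phi -> cptp Psi -> cptp (cp_tens Phi Psi).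
Proof.
move=> /stinespring [f [vf Ef]] /stinespring [g [vg Eg]].
apply: (cptp_ext (Psi := chan (aux_tens f g))).
  by move=> X; rewrite chan_tens; apply: cp_tens_ext => Y; rewrite ?Ef ?Eg.
exact: cptp_chan (valid_aux_tens vf vg).
Qed.

Lemma cast_inverse_pair n m (e : n = m) (e' : m = n) :
  @inverse_pair CPTPcat n m (conj_ch (pmx (cast_ord e))) (conj_ch (pmx (cast_ord e'))).
Proof.
by split; try apply: cptp_conj; try apply: isometry_cast; move=> X;
  rewrite /= conj_cast_inv.
Qed.

(* The coherence laws, stated for arbitrary linear maps and proved on
   products of matrix units. *)
Lemma cp_tens_comp a b c a' b' c' (f : 'M[C]_a -> 'M[C]_b) (g : 'M[C]_b -> 'M[C]_c)
    (f' : 'M[C]_a' -> 'M[C]_b') (g' : 'M[C]_b' -> 'M[C]_c') :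
  lin f -> lin g -> lin f' -> lin g' -> forall X,
  cp_tens (fun Y => g (f Y)) (fun Y => g' (f' Y)) X = cp_tens g g' (cp_tens f f' X).
Proof.
move=> lf lg lf' lg'; apply: lin_ext2; first exact: lin_cp_tens.
  by apply: lin_comp; exact: lin_cp_tens.
by move=> i j k l; rewrite !cp_tens_tens //; exact: lin_comp.
Qed.

Lemma alpha_natural a b c a' b' c' (f : 'M[C]_a -> 'M[C]_a')
    (g : 'M[C]_b -> 'M[C]_b') (h : 'M[C]_c -> 'M[C]_c') :
  lin f -> lin g -> lin h -> forall X,
  conj_ch (alpha_mx a' b' c') (cp_tens (cp_tens f g) h X)
  = cp_tens f (cp_tens g h) (conj_ch (alpha_mx a b c) X).
Proof.
move=> lf lg lh; apply: lin_ext3.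
- by apply: lin_comp; [exact: lin_cp_tens | exact: lin_conj].
- by apply: lin_comp; [exact: lin_conj | exact: lin_cp_tens].
move=> i j k l p q.
rewrite [in LHS]cp_tens_tens ?[in LHS]cp_tens_tens //; last exact: lin_cp_tens.
by rewrite !conj_alpha_tens !cp_tens_tens //; exact: lin_cp_tens.
Qed.

Lemma lambda_natural a b (f : 'M[C]_a -> 'M[C]_b) : lin f -> forall X,
  conj_ch (lambda_mx b) (cp_tens (fun Y : 'M[C]_1 => Y) f X)
  = f (conj_ch (lambda_mx a) X).
Proof.
move=> lf; apply: lin_ext2.
- by apply: lin_comp; [exact: lin_cp_tens | exact: lin_conj].
- exact: lin_comp (lin_conj _) lf.
by move=> i j k l; rewrite cp_tens_tens // !conj_lambda_tens (linZ lf).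
Qed.

Lemma rho_natural a b (f : 'M[C]_a -> 'M[C]_b) : lin f -> forall X,
  conj_ch (rho_mx b) (cp_tens f (fun Y : 'M[C]_1 => Y) X)
  = f (conj_ch (rho_mx a) X).
Proof.
move=> lf; apply: lin_ext2.
- by apply: lin_comp; [exact: lin_cp_tens | exact: lin_conj].
- exact: lin_comp (lin_conj _) lf.
by move=> i j k l; rewrite cp_tens_tens // !conj_rho_tens (linZ lf).
Qed.

Lemma alpha_pentagon a b c d (X : 'M[C]_(a * b * c * d)) :
  cp_tens (fun Y : 'M[C]_a => Y) (conj_ch (alpha_mx b c d))
    (conj_ch (alpha_mx a (b * c) d)
       (cp_tens (conj_ch (alpha_mx a b c)) (fun Y : 'M[C]_d => Y) X))
  = conj_ch (alpha_mx a b (c * d)) (conj_ch (alpha_mx (a * b) c d) X).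
Proof.
move: X; apply: lin_ext4.
- apply: lin_comp; last exact: lin_cp_tens.
  by apply: lin_comp; [exact: lin_cp_tens | exact: lin_conj].
- by apply: lin_comp; exact: lin_conj.
move=> i j k l p q u v.
rewrite cp_tens_tens; [|exact: lin_conj|exact: lin_id].
rewrite !conj_alpha_tens cp_tens_tens; [|exact: lin_id|exact: lin_conj].
by rewrite conj_alpha_tens.
Qed.

Lemma alpha_triangle a b (X : 'M[C]_(a * 1 * b)) :
  cp_tens (fun Y : 'M[C]_a => Y) (conj_ch (lambda_mx b)) (conj_ch (alpha_mx a 1 b) X)
  = cp_tens (conj_ch (rho_mx a)) (fun Y : 'M[C]_b => Y) X.
Proof.
move: X; apply: lin_ext3.
- by apply: lin_comp; [exact: lin_conj | exact: lin_cp_tens].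
- exact: lin_cp_tens.
move=> i j k l p q.
rewrite conj_alpha_tens cp_tens_tens; [|exact: lin_id|exact: lin_conj].
rewrite cp_tens_tens; [|exact: lin_conj|exact: lin_id].
by rewrite conj_lambda_tens conj_rho_tens tensmxZl tensmxZr.
Qed.

Lemma CPTP_moncat : is_moncat CPTPcat.
Proof.
constructor => /=.
- by [].
- by move=> a b f g _ _ E X; rewrite E.
- by move=> a b f g h _ _ _ E1 E2 X; rewrite E1 E2.
- exact: cptp_id.
- by move=> a b c g f vg vf; exact: cptp_comp.
- by move=> a b a' b' f g vf vg; exact: cptp_tens.
- by move=> a b c g g' f f' _ _ _ _ Eg Ef X; rewrite Ef Eg.
- by move=> a b a' b' f f' g g' _ _ _ _ Ef Eg; exact: cp_tens_ext.
- by [].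
- by [].
- by [].
- by move=> a b X; rewrite cp_tens_id.
- by move=> a b c a' b' c' f g f' g' vf vg vf' vg'; apply: cp_tens_comp; exact: cptp_lin.
- by move=> a b c; exact: cast_inverse_pair.
- by move=> a; exact: cast_inverse_pair.
- by move=> a; exact: cast_inverse_pair.
- by move=> a b c a' b' c' f g h vf vg vh; apply: alpha_natural; exact: cptp_lin.
- by move=> a b f vf; apply: lambda_natural; exact: cptp_lin.
- by move=> a b f vf; apply: rho_natural; exact: cptp_lin.
- exact: alpha_pentagon.
- exact: alpha_triangle.
Qed.

(** * Ext(Aux(Isometry)) is a monoidal category *)

(* Pointwise channel equations in functional form, for rewriting under
   cp_tens. *)
Lemma chan_idF n : chan (aux_id n) = (fun X => X).
Proof. by apply: functional_extensionality => X; rewrite chan_id. Qed.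

Lemma chan_compF n m k (g : auxhom m k) (f : auxhom n m) :
  chan (aux_comp g f) = (fun X => chan g (chan f X)).
Proof. by apply: functional_extensionality => X; rewrite chan_comp. Qed.

Lemma chan_tensF n n' m m' (f : auxhom n m) (f' : auxhom n' m') :
  chan (aux_tens f f') = cp_tens (chan f) (chan f').
Proof. by apply: functional_extensionality => X; rewrite chan_tens. Qed.

Lemma chan_embF n m (U : 'M[C]_(m, n)) : chan (aux_emb U) = conj_ch U.
Proof. by apply: functional_extensionality => X; rewrite chan_emb. Qed.

Lemma ext_chanF n m (f g : auxhom n m) : ext_eq f g -> chan f = chan g.
Proof. by move=> h; apply: functional_extensionality; exact: ext_chan. Qed.

(* Every equation between Aux-terms is proved by comparing channels
   (chan_ext): validity of the terms is closure under the Aux operations,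
   and the channels are computed by the functoriality of chan. *)
Ltac aux_valid_tac := repeat (first [ apply: valid_aux_comp | apply: valid_aux_tens
  | apply: valid_aux_id | (apply: valid_aux_emb; exact: isometry_cast)
  | assumption ]).

Ltac by_channels := apply: chan_ext; aux_valid_tac; move=> X;
  repeat (first [ rewrite chan_compF | rewrite chan_tensF
                | rewrite chan_embF | rewrite chan_idF ]).

(* The laws of Ext(Aux(Isometry)) are the images of the laws of CPTP. *)
Lemma Ext_moncat : is_moncat ExtAuxIsometry.
Proof.
have CM := CPTP_moncat.
constructor => /=.
- by move=> a b f _ x _; exact: rst_refl.
- by move=> a b f g _ _ h x vx; apply: rst_sym; exact: h.
- by move=> a b f g h _ _ _ h1 h2 x vx; exact: rst_trans (h1 x vx) (h2 x vx).
- exact: valid_aux_id.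
- by move=> a b c g f vg vf; exact: valid_aux_comp.
- by move=> a b a' b' f g vf vg; exact: valid_aux_tens.
- move=> a b c g g' f f' vg vg' vf vf' Eg Ef; by_channels.
  by rewrite (ext_chanF Ef) (ext_chanF Eg).
- move=> a b a' b' f f' g g' vf vf' vg vg' Ef Eg; by_channels.
  by rewrite (ext_chanF Ef) (ext_chanF Eg).
- by move=> a b c d h g f vh vg vf; by_channels.
- by move=> a b f vf; by_channels.
- by move=> a b f vf; by_channels.
- by move=> a b; by_channels; rewrite cp_tens_id.
- move=> a b c a' b' c' f g f' g' vf vg vf' vg'; by_channels.
  exact: (thom_comp CM (cptp_chan vf) (cptp_chan vg) (cptp_chan vf') (cptp_chan vg')).
- by move=> a b c; split; aux_valid_tac; by_channels; rewrite conj_cast_inv.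
- by move=> a; split; aux_valid_tac; by_channels; rewrite conj_cast_inv.
- by move=> a; split; aux_valid_tac; by_channels; rewrite conj_cast_inv.
- move=> a b c a' b' c' f g h vf vg vh; by_channels.
  exact: (assoc_nat CM (cptp_chan vf) (cptp_chan vg) (cptp_chan vh)).
- by move=> a b f vf; by_channels; exact: (lunit_nat CM (cptp_chan vf)).
- by move=> a b f vf; by_channels; exact: (runit_nat CM (cptp_chan vf)).
- by move=> a b c d; by_channels; exact: (pentagon CM a b c d).
- by move=> a b; by_channels; exact: (triangle CM a b).
Qed.

Definition Fchan : MonFun ExtAuxIsometry CPTPcat :=
  @Build_MonFun ExtAuxIsometry CPTPcat (fun n => n)
    (fun a b (f : auxhom a b) => chan f)
    (fun X => X) (fun X => X) (fun a b X => X) (fun a b X => X).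

Lemma id_inverse_pair n : @inverse_pair CPTPcat n n (fun X => X) (fun X => X).
Proof. by split => //; exact: cptp_id. Qed.

Lemma Fchan_strong_monoidal : is_strong_monoidal Fchan.
Proof.
constructor => /=.
- by move=> a b f vf; exact: cptp_chan.
- by move=> a b f g _ _ h; exact: ext_chan.
- by move=> a X; rewrite chan_id.
- by move=> a b c g f _ _ X; rewrite chan_comp.
- exact: id_inverse_pair.
- by move=> a b; exact: id_inverse_pair.
- by move=> a b a' b' f g _ _ X; rewrite chan_tens.
- by move=> a b c X; rewrite !cp_tens_id chan_emb.
- by move=> a X; rewrite cp_tens_id chan_emb.
- by move=> a X; rewrite cp_tens_id chan_emb.
Qed.

(* Full by Stinespring dilation, faithful by uniqueness of purification,
   and bijective on objects. *)
Lemma Fchan_equivalence : is_equivalence Fchan.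
Proof.
constructor => /=.
- by move=> a b g /stinespring [f [vf Ef]]; exists f.
- by move=> a b f g vf vg E; exact: chan_ext.
- by move=> d; exists d, (fun X => X), (fun X => X); exact: id_inverse_pair.
Qed.

Theorem proposition5p1 :
  is_moncat ExtAuxIsometry /\ is_moncat CPTPcat /\
  exists F : MonFun ExtAuxIsometry CPTPcat, monoidal_equivalence F.
Proof.
split; first exact: Ext_moncat.
split; first exact: CPTP_moncat.
by exists Fchan; split; [exact: Fchan_strong_monoidal | exact: Fchan_equivalence].
Qed.
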